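(* Let $(X,|\cdot|_X)$ be a Banach space, $T>0$, and let $A\colon D(A)\subset X\to X$ be the infinitesimal generator of a $C_0$-semigroup $\{S(t): t\ge 0\}$ of bounded linear operators on $X$. Let $a,b,k>0$ and let $F,G\colon X^2\to X$ be continuous. Define $N_1,N_2\colon C([0,T];X)^2\to C([0,T];X)$ by \begin{align*} N_1(x,y)(t) &= \frac{1}{a}S(t)\Big[S(T)x(0)-kS(T)y(0)+kb\,y(0) + \int_0^T S(T-s)\big(F(x(s),y(s))-kG(x(s),y(s))\big)\,ds\Big] \\ &\quad+\int_0^t S(t-s)F(x(s),y(s))\,ds,\\ N_2(x,y)(t) &= \frac{1}{kb}S(t)\Big[-S(T)x(0)+kS(T)y(0)+a\,x(0) - \int_0^T S(T-s)\big(F(x(s),y(s))-kG(x(s),y(s))\big)\,ds\Big] \\ &\quad+\int_0^t S(t-s)G(x(s),y(s))\,ds, \end{align*} for $t\in[0,T]$. If $(x,y)\in C([0,T];X)^2$ satisfies $x=N_1(x,y)$ and $y=N_2(x,y)$, then for all $t\in[0,T]$ \[ x(t)=S(t)x(0)+\int_0^t S(t-s)F(x(s),y(s))\,ds,\qquad y(t)=S(t)y(0)+\int_0^t S(t-s)G(x(s),y(s))\,ds, \] and moreover $x(T)-a\,x(0)=k\big(y(T)-b\,y(0)\big)$.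
   Context: Integrals are Bochner/Riemann integrals of continuous $X$-valued functions. The two integral equations say that $x,y$ form a mild solution of the system $x'=Ax+F(x,y)$, $y'=Ay+G(x,y)$ on $[0,T]$. *)

From Stdlib Require Import Reals.
From Coquelicot Require Import Coquelicot.
Open Scope R_scope.

Section Defs.
Context {X : CompleteNormedModule R_AbsRing}.

(** {S(t) : t >= 0} is a C_0-semigroup of bounded linear operators on X.
    (Values of S at t < 0 are irrelevant.)  Coquelicot's [is_linear]
    includes boundedness. *)
Definition C0_semigroup (S : R -> X -> X) : Prop :=
  (forall t, 0 <= t -> is_linear (S t)) /\
  (forall x, S 0 x = x) /\
  (forall t s x, 0 <= t -> 0 <= s -> S (t + s) x = S t (S s x)) /\
  (forall x, filterlim (fun t => S t x) (at_right 0) (locally x)).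

Definition is_generator (S : R -> X -> X) (D : X -> Prop) (A : X -> X) : Prop :=
  forall x,
    (D x <-> exists l : X,
       filterlim (fun h => scal (/ h) (minus (S h x) x)) (at_right 0) (locally l)) /\
    (D x -> filterlim (fun h => scal (/ h) (minus (S h x) x)) (at_right 0) (locally (A x))).

Definition cont_on_0T (T : R) (x : R -> X) : Prop :=
  forall t, 0 <= t <= T ->
    filterlim x (within (fun u => 0 <= u <= T) (locally t)) (locally (x t)).

Definition Iterm (S : R -> X -> X) (T k : R) (F G : X * X -> X)
  (x y : R -> X) : X :=
  RInt (fun s => S (T - s) (minus (F (x s, y s)) (scal k (G (x s, y s))))) 0 T.

Definition N1 (S : R -> X -> X) (T a b k : R) (F G : X * X -> X)
  (x y : R -> X) (t : R) : X :=
  plus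
    (scal (/ a) (S t (plus (plus (plus (S T (x 0)) (opp (scal k (S T (y 0)))))
                                  (scal (k * b) (y 0)))
                            (Iterm S T k F G x y))))
    (RInt (fun s => S (t - s) (F (x s, y s))) 0 t).

Definition N2 (S : R -> X -> X) (T a b k : R) (F G : X * X -> X)
  (x y : R -> X) (t : R) : X :=
  plus
    (scal (/ (k * b)) (S t (minus (plus (plus (opp (S T (x 0))) (scal k (S T (y 0))))
                                         (scal a (x 0)))
                                   (Iterm S T k F G x y))))
    (RInt (fun s => S (t - s) (G (x s, y s))) 0 t).

End Defs.

From Stdlib Require Import Reals Lra Lia Classical ClassicalEpsilon.
From Coquelicot Require Import Coquelicot.
Open Scope R_scope.

(* Evaluating [x = N1 (x, y)] at [t = 0], where [S 0] is the identity and the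
   convolution vanishes, shows that the bracket of [N1] equals [a x(0)];
   likewise the bracket of [N2] equals [k b y(0)].  Substituting back gives the
   mild formulas, and comparing the mild formula for [x] at [T] with the bracket
   identity gives the boundary relation, once the integral of
   [S(T-s)(F - k G)] is split as [∫ S(T-s) F - k ∫ S(T-s) G].
   That split needs the Riemann integrability of [s ↦ S(T-s) w(s)] for
   continuous [w], i.e. the joint continuity of [(t, z) ↦ S(t) z] on
   [[0,T] × X].  This rests on [sup_{t ≤ T} ‖S(t)‖ < ∞], which follows from the
   uniform boundedness principle (proved by a nested-balls argument) near
   [t = 0], and from the semigroup law beyond. *)

(* Coquelicot's algebraic lemmas are used with their structure given
   explicitly: with the structure left implicit, rewriting fails to match terms
   built through the [CompleteNormedModule] coercions. *)
Section AbelianGroupIdentities.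
Context {G : AbelianGroup}.

Lemma plus_swap_l (x y z : G) : plus x (plus y z) = plus y (plus x z).
Proof. rewrite !(@plus_assoc G), (@plus_comm G x y). reflexivity. Qed.

Lemma minus_plus_cancel_l (x h : G) : minus (plus x h) x = h.
Proof.
  unfold minus. rewrite (@plus_comm G x h), <- (@plus_assoc G), (@plus_opp_r G).
  exact (@plus_zero_r G h).
Qed.

Lemma plus_opp_cancel_l (x y : G) : plus x (plus (opp x) y) = y.
Proof. rewrite (@plus_assoc G), (@plus_opp_r G), (@plus_zero_l G). reflexivity. Qed.

Lemma minus_plus_shuffle (p f u v w : G) :
  minus (plus p f) (plus (plus (plus p (opp u)) v) (minus f w)) = minus (plus u w) v.
Proof.
  unfold minus. rewrite !(@opp_plus G), !(@opp_opp G), <- !(@plus_assoc G).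
  rewrite (plus_swap_l f (opp p)), plus_opp_cancel_l.
  rewrite (plus_swap_l (opp v) (opp f)), (plus_swap_l u (opp f)), plus_opp_cancel_l.
  rewrite (@plus_comm G (opp v) w). reflexivity.
Qed.

End AbelianGroupIdentities.

Section Norm.
Context {V : CompleteNormedModule R_AbsRing}.

Lemma norm_scal_eq (l : R) (v : V) : norm (scal l v) = Rabs l * norm v.
Proof.
  apply Rle_antisym; [exact (norm_scal l v)|].
  destruct (Req_dec l 0) as [->|Hl].
  - rewrite Rabs_R0, Rmult_0_l. apply norm_ge_0.
  - assert (Hv : norm v <= Rabs (/ l) * norm (scal l v)).
    { assert (E : scal (/ l) (scal l v) = v).
      { rewrite scal_assoc. change (mult (/ l) l) with (/ l * l).
        rewrite Rinv_l by exact Hl. exact (scal_one v). }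
      rewrite <- E at 1. exact (norm_scal (/ l) (scal l v)). }
    rewrite Rabs_inv in Hv.
    assert (0 < Rabs l) by (apply Rabs_pos_lt; exact Hl).
    apply Rmult_le_reg_l with (/ Rabs l); [apply Rinv_0_lt_compat; lra|].
    rewrite <- Rmult_assoc, Rinv_l by lra. lra.
Qed.

Lemma norm_minus_self (u : V) : norm (minus u u) = 0.
Proof. rewrite minus_eq_zero. exact (@norm_zero R_AbsRing _). Qed.

Lemma norm_minus_sym (u v : V) : norm (minus u v) = norm (minus v u).
Proof. rewrite <- norm_opp, opp_minus. reflexivity. Qed.

Lemma norm_minus_triangle (u v w : V) :
  norm (minus u w) <= norm (minus u v) + norm (minus v w).
Proof. rewrite (minus_trans v). exact (@norm_triangle R_AbsRing _ _ _). Qed.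

Lemma norm_minus_le (u v : V) : norm (minus u v) <= norm u + norm v.
Proof.
  rewrite <- (norm_opp v). unfold minus. exact (@norm_triangle R_AbsRing _ _ _).
Qed.

Lemma norm_ge_norm_minus (u v : V) : norm u - norm (minus u v) <= norm v.
Proof.
  assert (H : norm (plus (minus u v) v) <= norm (minus u v) + norm v)
    by exact (@norm_triangle R_AbsRing _ _ _).
  replace (plus (minus u v) v) with u in H; [lra|].
  unfold minus. rewrite <- plus_assoc, plus_opp_l, plus_zero_r. reflexivity.
Qed.

End Norm.

Lemma nested_balls_limit {U : CompleteNormedModule R_AbsRing}
  (c : nat -> U) (r : nat -> R) :
  (forall n, 0 < r n) ->
  (forall n, norm (minus (c (S n)) (c n)) <= r n) ->
  (forall n, r (S n) <= r n / 2) ->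
  exists l, forall n, norm (minus l (c n)) <= 2 * r n.
Proof.
  intros Hpos Hstep Hhalf.
  assert (Htele : forall n d, norm (minus (c (n + d)%nat) (c n)) <= 2 * (r n - r (n + d)%nat)).
  { intros n d; induction d as [|d IH].
    - rewrite Nat.add_0_r. replace (2 * (r n - r n)) with 0 by ring. right. apply norm_minus_self.
    - rewrite Nat.add_succ_r.
      pose proof (norm_minus_triangle (c (S (n + d))) (c (n + d)%nat) (c n)).
      pose proof (Hstep (n + d)%nat). pose proof (Hhalf (n + d)%nat). lra. }
  assert (Hgeo : forall n, r n <= r O * (1 / 2) ^ n).
  { induction n as [|n IH]; simpl; [lra|]. pose proof (Hhalf n). lra. }
  assert (Hsmall : forall eps, 0 < eps -> exists N, 2 * r N < eps).
  { intros eps Heps.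
    destruct (pow_lt_1_zero (1 / 2) ltac:(rewrite Rabs_pos_eq; lra)
                (eps / (2 * r O)) ltac:(pose proof (Hpos O); apply Rdiv_lt_0_compat; lra))
      as [N HN].
    exists N. specialize (HN N (le_n N)). rewrite Rabs_pos_eq in HN by (apply pow_le; lra).
    pose proof (Hgeo N). pose proof (Hpos O).
    apply Rmult_lt_compat_l with (r := 2 * r O) in HN; [|lra].
    replace (2 * r O * (eps / (2 * r O))) with eps in HN by (field; lra). nra. }
  set (Fc := filtermap c eventually).
  assert (HFc : ProperFilter Fc) by (apply filtermap_proper_filter, eventually_filter).
  assert (Hcauchy : cauchy Fc).
  { intros [eps Heps]. destruct (Hsmall eps Heps) as [N HN].
    exists (c N), N. intros m Hm. refine (@norm_compat1 R_AbsRing _ _ _ _ _).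
    replace m with (N + (m - N))%nat by lia.
    eapply Rle_lt_trans; [apply Htele|]. pose proof (Hpos (N + (m - N))%nat). simpl. lra. }
  assert (Hlim : filterlim c eventually (locally (lim Fc)))
    by (apply filterlim_locally; exact (complete_cauchy Fc HFc Hcauchy)).
  exists (lim Fc). intros n. apply Rle_plus_epsilon. intros eps Heps.
  destruct (proj1 (filterlim_locally_ball_norm _ _) Hlim (mkposreal eps Heps)) as [N HN].
  assert (Hclose : norm (minus (c (n + N)%nat) (lim Fc)) < eps)
    by exact (HN (n + N)%nat ltac:(lia)).
  pose proof (norm_minus_triangle (lim Fc) (c (n + N)%nat) (c n)).
  rewrite norm_minus_sym in Hclose.
  pose proof (Htele n N). pose proof (Hpos (n + N)%nat). lra.
Qed.

Section UniformBoundedness.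
Context {U V : CompleteNormedModule R_AbsRing}.

Lemma linear_large_near (L : U -> V) (M : R) (z x : U) (r : R) :
  is_linear L -> 0 <= M -> M * norm z < norm (L z) -> 0 < r ->
  exists x', norm (minus x' x) <= r /\ M * r / 2 <= norm (L x').
Proof.
  intros HL HM Hz Hr.
  assert (Hz0 : 0 < norm z).
  { destruct (linear_norm L HL) as [C [HC HCb]].
    pose proof (HCb z). pose proof (norm_ge_0 z). nra. }
  set (h := scal (r / norm z) z).
  assert (Hrz : 0 < r / norm z) by (apply Rdiv_lt_0_compat; lra).
  assert (Hh : norm h = r).
  { unfold h. rewrite norm_scal_eq, Rabs_pos_eq by lra. field. lra. }
  assert (HLh : M * r < norm (L h)).
  { replace (L h) with (scal (r / norm z) (L z)) by (symmetry; exact (linear_scal L HL _ _)).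
    rewrite norm_scal_eq, Rabs_pos_eq by lra.
    replace (M * r) with (r / norm z * (M * norm z)) by (field; lra).
    apply Rmult_lt_compat_l; lra. }
  destruct (Rle_lt_dec (M * r / 2) (norm (L x))) as [Hx|Hx].
  - exists x. rewrite norm_minus_self. lra.
  - exists (plus x h).
    rewrite (minus_plus_cancel_l (G := U)).
    replace (L (plus x h)) with (plus (L x) (L h)) by (symmetry; exact (linear_plus L HL x h)).
    pose proof (norm_minus_le (plus (L x) (L h)) (L x)) as Htri.
    rewrite (minus_plus_cancel_l (G := V)) in Htri. split; lra.
Qed.

Lemma unbounded_linear_hump {I : Type} (L : I -> U -> V) :
  (forall i, is_linear (L i)) ->
  (forall M, exists i z, M * norm z < norm (L i z)) ->
  forall (x : U) (r : posreal) (c : R), 0 <= c ->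
  exists (i : I) (x' : U) (r' : posreal),
    norm (minus x' x) <= r /\ r' <= r / 2 /\
    forall u, norm (minus u x') <= 2 * r' -> c < norm (L i u).
Proof.
  intros Hlin Hunb x [r Hr] c Hc; simpl.
  assert (HM : 0 <= 2 * (c + 1) / r) by (apply Rlt_le, Rdiv_lt_0_compat; lra).
  destruct (Hunb (2 * (c + 1) / r)) as [i [z Hz]].
  destruct (linear_large_near (L i) _ z x r (Hlin i) HM Hz Hr) as [x' [Hx' HLx']].
  replace (2 * (c + 1) / r * r / 2) with (c + 1) in HLx' by (field; lra).
  destruct (linear_norm (L i) (Hlin i)) as [C [HC HCb]].
  assert (Hr' : 0 < Rmin (r / 2) (1 / (4 * C)))
    by (apply Rmin_glb_lt; [lra | apply Rdiv_lt_0_compat; lra]).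
  exists i, x', (mkposreal _ Hr'); simpl.
  split; [exact Hx'|]. split; [apply Rmin_l|].
  intros u Hu.
  pose proof (norm_ge_norm_minus (L i x') (L i u)) as Htri.
  replace (minus (L i x') (L i u)) with (L i (minus x' u)) in Htri
    by exact (linear_minus (L i) x' u (Hlin i)).
  pose proof (HCb (minus x' u)) as HCu. rewrite norm_minus_sym in HCu.
  assert (C * norm (minus u x') <= C * (2 * (1 / (4 * C)))).
  { apply Rmult_le_compat_l; [lra|]. pose proof (Rmin_r (r / 2) (1 / (4 * C))). lra. }
  replace (C * (2 * (1 / (4 * C)))) with (1 / 2) in H by (field; lra).
  lra.
Qed.

Theorem uniform_boundedness {I : Type} (L : I -> U -> V) :
  (forall i, is_linear (L i)) ->
  (forall u, exists B, forall i, norm (L i u) <= B) ->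
  exists M, forall i u, norm (L i u) <= M * norm u.
Proof.
  intros Hlin Hpt. apply NNPP. intros Hbdd.
  assert (Hunb : forall M, exists i z, M * norm z < norm (L i z)).
  { intros M. apply NNPP. intros Hno. apply Hbdd. exists M. intros i z.
    apply Rnot_lt_le. intros Hlt. apply Hno. exists i, z. exact Hlt. }
  destruct (choice (fun (p : nat * (U * posreal)) (q : I * (U * posreal)) =>
      norm (minus (fst (snd q)) (fst (snd p))) <= snd (snd p) /\
      snd (snd q) <= snd (snd p) / 2 /\
      forall u, norm (minus u (fst (snd q))) <= 2 * snd (snd q) ->
        INR (fst p) < norm (L (fst q) u)))
    as [g Hg].
  { intros [j [x r]].
    destruct (unbounded_linear_hump L Hlin Hunb x r (INR j) (pos_INR j))
      as [i [x' [r' Hhump]]].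
    exists (i, (x', r')). exact Hhump. }
  set (ball_seq := nat_rect (fun _ => (U * posreal)%type) (zero, mkposreal 1 Rlt_0_1)
                     (fun j p => snd (g (j, p)))).
  assert (Hnext : forall j, ball_seq (S j) = snd (g (j, ball_seq j))) by reflexivity.
  destruct (nested_balls_limit (fun j => fst (ball_seq j)) (fun j => snd (ball_seq j)))
    as [l Hl].
  - intros j. apply cond_pos.
  - intros j. rewrite Hnext. apply (Hg (j, ball_seq j)).
  - intros j. rewrite Hnext. apply (Hg (j, ball_seq j)).
  - destruct (Hpt l) as [B HB]. destruct (INR_unbounded B) as [j Hj].
    pose proof (Hl (S j)) as Hlj. rewrite Hnext in Hlj.
    pose proof (proj2 (proj2 (Hg (j, ball_seq j))) l Hlj) as Hbig.
    specialize (HB (fst (g (j, ball_seq j)))). simpl in Hbig. lra.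
Qed.

End UniformBoundedness.

Lemma finite_upper_bound (g : nat -> R) (N : nat) :
  exists B, forall n, (n < N)%nat -> g n <= B.
Proof.
  induction N as [|N [B HB]]; [exists 0; intros; lia|].
  exists (Rmax B (g N)). intros n Hn.
  destruct (Nat.eq_dec n N) as [->|Hne]; [apply Rmax_r|].
  apply Rle_trans with B; [apply HB; lia | apply Rmax_l].
Qed.

Section C0Semigroup.
Context {X : CompleteNormedModule R_AbsRing}.
Variable Sg : R -> X -> X.
Hypothesis HS : C0_semigroup Sg.

Lemma C0_semigroup_right_cont_0 (z : X) (eps : R) : 0 < eps ->
  exists d, 0 < d /\ forall h, 0 <= h < d -> norm (minus (Sg h z) z) < eps.
Proof.
  intros Heps. destruct HS as [_ [HS0 [_ Hc]]].
  destruct (proj1 (filterlim_locally_ball_norm _ _) (Hc z) (mkposreal eps Heps)) as [d Hd].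
  exists d. split; [apply cond_pos|]. intros h Hh.
  destruct (Req_dec h 0) as [->|Hh0].
  - rewrite HS0, norm_minus_self. exact Heps.
  - apply (Hd h); [|lra]. change (Rabs (h - 0) < d). rewrite Rabs_pos_eq; lra.
Qed.

Lemma C0_semigroup_bounded_near_0 :
  exists d M, 0 < d /\ 0 < M /\ forall t, 0 <= t <= d -> forall z, norm (Sg t z) <= M * norm z.
Proof.
  destruct HS as [Hlin [HS0 _]]. apply NNPP. intros Hno.
  assert (Hbad : forall n : nat, exists t, 0 <= t <= / INR (S n) /\
                   exists z, INR (S n) * norm z < norm (Sg t z)).
  { intros n. apply NNPP. intros Hn. apply Hno.
    exists (/ INR (S n)), (INR (S n)).
    split; [apply Rinv_0_lt_compat, lt_0_INR; lia|]. split; [apply lt_0_INR; lia|].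
    intros t Ht z. apply Rnot_lt_le. intros Hlt. apply Hn. exists t. split; [exact Ht|].
    exists z. exact Hlt. }
  destruct (choice _ Hbad) as [tn Htn].
  destruct (uniform_boundedness (fun n => Sg (tn n))) as [M HM].
  - intros n. apply Hlin, Htn.
  - intros z. destruct (C0_semigroup_right_cont_0 z 1 Rlt_0_1) as [d [Hd Hnear]].
    destruct (archimed_cor1 d Hd) as [N [HN HN0]].
    destruct (finite_upper_bound (fun n => norm (Sg (tn n) z)) N) as [B HB].
    exists (Rmax B (norm z + 1)). intros n.
    destruct (Nat.lt_ge_cases n N) as [Hn|Hn].
    + apply Rle_trans with B; [exact (HB n Hn) | apply Rmax_l].
    + apply Rle_trans with (norm z + 1); [|apply Rmax_r].
      assert (Htd : 0 <= tn n < d).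
      { split; [apply Htn|]. apply Rle_lt_trans with (/ INR (S n)); [apply Htn|].
        apply Rle_lt_trans with (/ INR N); [|exact HN].
        apply Rinv_le_contravar; [apply lt_0_INR; lia | apply le_INR; lia]. }
      pose proof (Hnear (tn n) Htd). pose proof (norm_ge_norm_minus (Sg (tn n) z) z). lra.
  - destruct (INR_unbounded M) as [n Hn].
    destruct (proj2 (Htn n)) as [z Hz]. specialize (HM n z). simpl in HM.
    rewrite S_INR in Hz. pose proof (norm_ge_0 z). pose proof (pos_INR n). nra.
Qed.

Lemma C0_semigroup_bounded (L : R) :
  exists K, 0 < K /\ forall t, 0 <= t <= L -> forall z, norm (Sg t z) <= K * norm z.
Proof.
  destruct HS as [Hlin [HS0 [HSadd _]]].
  destruct C0_semigroup_bounded_near_0 as [d [M [Hd [HM0 HM]]]].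
  assert (Hstep : forall m : nat, exists K, 0 < K /\
            forall t, 0 <= t <= INR m * d -> forall z, norm (Sg t z) <= K * norm z).
  { intros m; induction m as [|m [K [HK HKb]]].
    - exists 1. split; [lra|]. intros t Ht z. simpl in Ht.
      replace t with 0 by lra. rewrite HS0. lra.
    - exists (M * K + M). split; [nra|]. intros t Ht z. rewrite S_INR in Ht.
      assert (HMK : 0 <= M * K * norm z)
        by (apply Rmult_le_pos; [nra | apply norm_ge_0]).
      destruct (Rle_lt_dec t d) as [Htd|Htd].
      + apply Rle_trans with (M * norm z); [apply HM; lra | lra].
      + replace t with ((t - d) + d) by ring. rewrite HSadd by lra.
        apply Rle_trans with (K * norm (Sg d z)); [apply HKb; lra|].
        pose proof (HM d ltac:(lra) z). nra. }
  destruct (INR_archimed d L Hd) as [m Hm].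
  destruct (Hstep m) as [K [HK HKb]]. exists K. split; [exact HK|].
  intros t Ht. apply HKb. lra.
Qed.

Lemma C0_semigroup_strongly_continuous (L t0 : R) (z : X) (eps : R) :
  0 <= t0 <= L -> 0 < eps ->
  exists d, 0 < d /\ forall t, 0 <= t <= L -> Rabs (t - t0) < d ->
    norm (minus (Sg t z) (Sg t0 z)) < eps.
Proof.
  intros Ht0 Heps. pose proof HS as [Hlin [_ [HSadd _]]].
  destruct (C0_semigroup_bounded L) as [K [HK HKb]].
  destruct (C0_semigroup_right_cont_0 z (eps / K) ltac:(apply Rdiv_lt_0_compat; lra))
    as [d [Hd Hnear]].
  assert (Hshift : forall s h, 0 <= s <= L -> 0 <= h < d ->
            norm (minus (Sg (s + h) z) (Sg s z)) < eps).
  { intros s h Hs Hh. rewrite HSadd by lra.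
    replace (minus (Sg s (Sg h z)) (Sg s z)) with (Sg s (minus (Sg h z) z))
      by exact (linear_minus (Sg s) _ _ (Hlin s (proj1 Hs))).
    apply Rle_lt_trans with (K * norm (minus (Sg h z) z)); [apply HKb; lra|].
    replace eps with (K * (eps / K)) by (field; lra).
    apply Rmult_lt_compat_l; [lra | apply Hnear; lra]. }
  exists d. split; [exact Hd|]. intros t Ht Htt0.
  destruct (Rle_lt_dec t0 t) as [Hle|Hlt].
  - replace t with (t0 + (t - t0)) by ring.
    apply Hshift; [lra|]. rewrite Rabs_pos_eq in Htt0; lra.
  - rewrite norm_minus_sym. replace t0 with (t + (t0 - t)) by ring.
    apply Hshift; [lra|]. rewrite Rabs_left in Htt0; lra.
Qed.

Lemma C0_semigroup_jointly_continuous (L t0 : R) (z0 : X) (eps : R) :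
  0 <= t0 <= L -> 0 < eps ->
  exists d, 0 < d /\ forall t z, 0 <= t <= L -> Rabs (t - t0) < d ->
    norm (minus z z0) < d -> norm (minus (Sg t z) (Sg t0 z0)) < eps.
Proof.
  intros Ht0 Heps. pose proof HS as [Hlin _].
  destruct (C0_semigroup_bounded L) as [K [HK HKb]].
  destruct (C0_semigroup_strongly_continuous L t0 z0 (eps / 2) Ht0 ltac:(lra))
    as [d1 [Hd1 Hcont]].
  assert (Hd2 : 0 < eps / (2 * K)) by (apply Rdiv_lt_0_compat; lra).
  exists (Rmin d1 (eps / (2 * K))). split; [apply Rmin_glb_lt; lra|].
  intros t z Ht Htt0 Hzz0.
  pose proof (Rmin_l d1 (eps / (2 * K))). pose proof (Rmin_r d1 (eps / (2 * K))).
  pose proof (norm_minus_triangle (Sg t z) (Sg t z0) (Sg t0 z0)) as Htri.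
  replace (minus (Sg t z) (Sg t z0)) with (Sg t (minus z z0)) in Htri
    by exact (linear_minus (Sg t) _ _ (Hlin t (proj1 Ht))).
  pose proof (HKb t Ht (minus z z0)) as Hfirst.
  pose proof (Hcont t Ht ltac:(lra)) as Hsecond.
  assert (K * norm (minus z z0) < eps / 2).
  { replace (eps / 2) with (K * (eps / (2 * K))) by (field; lra).
    apply Rmult_lt_compat_l; lra. }
  lra.
Qed.

End C0Semigroup.

Definition clamp (L s : R) : R := Rmax 0 (Rmin L s).

Lemma clamp_in (L s : R) : 0 <= L -> 0 <= clamp L s <= L.
Proof. intros. unfold clamp, Rmax, Rmin. repeat destruct Rle_dec; lra. Qed.

Lemma clamp_id (L s : R) : 0 <= s <= L -> clamp L s = s.
Proof. intros. unfold clamp, Rmax, Rmin. repeat destruct Rle_dec; lra. Qed.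

Lemma clamp_lipschitz (L u s : R) : 0 <= L -> Rabs (clamp L u - clamp L s) <= Rabs (u - s).
Proof.
  intros. unfold clamp, Rmax, Rmin, Rabs.
  repeat destruct Rle_dec; repeat destruct Rcase_abs; lra.
Qed.

Section Continuity.
Context {X : CompleteNormedModule R_AbsRing}.

Lemma continuous_eps_delta (f : R -> X) (s : R) :
  continuous f s <->
  forall eps, 0 < eps -> exists d, 0 < d /\
    forall u, Rabs (u - s) < d -> norm (minus (f u) (f s)) < eps.
Proof.
  split.
  - intros Hf eps Heps.
    destruct (proj1 (filterlim_locally_ball_norm _ _) Hf (mkposreal eps Heps)) as [d Hd].
    exists d. split; [apply cond_pos|]. intros u Hu. exact (Hd u Hu).
  - intros Hf. apply (proj2 (filterlim_locally_ball_norm f (f s))). intros [eps Heps].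
    destruct (Hf eps Heps) as [d [Hd Hdf]]. exists (mkposreal d Hd). exact Hdf.
Qed.

Lemma cont_on_0T_clamp (L : R) (w : R -> X) :
  0 <= L -> cont_on_0T L w -> forall s, continuous (fun s => w (clamp L s)) s.
Proof.
  intros HL Hw s. unfold continuous.
  apply filterlim_comp with (G := within (fun u => 0 <= u <= L) (locally (clamp L s))).
  - intros P [d Hd]. exists d. intros u Hu. apply Hd; [|apply clamp_in, HL].
    exact (Rle_lt_trans _ _ _ (clamp_lipschitz L u s HL) Hu).
  - apply Hw, clamp_in, HL.
Qed.

Lemma cont_on_0T_comp2 (T : R) (F : X * X -> X) (x y : R -> X) :
  (forall p, continuous F p) -> cont_on_0T T x -> cont_on_0T T y ->
  cont_on_0T T (fun s => F (x s, y s)).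
Proof.
  intros HF Hx Hy t Ht.
  apply filterlim_comp with (G := locally (x t, y t)); [|apply HF].
  apply filterlim_locally. intros eps.
  generalize (filter_and _ _ (proj1 (filterlim_locally _ _) (Hx t Ht) eps)
                              (proj1 (filterlim_locally _ _) (Hy t Ht) eps)).
  apply filter_imp. intros u Hu. exact Hu.
Qed.

Lemma ex_RInt_C0_semigroup_convolution (Sg : R -> X -> X) (L : R) (w : R -> X) :
  C0_semigroup Sg -> 0 <= L -> cont_on_0T L w ->
  ex_RInt (fun s => Sg (L - s) (w s)) 0 L.
Proof.
  intros HS HL Hw.
  (* [ex_RInt_continuous] asks for two-sided continuity, hence the constant
     extension of the integrand beyond [0, L] through [clamp]. *)
  apply ex_RInt_ext with (fun s => Sg (L - clamp L s) (w (clamp L s))).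
  { intros s Hs. rewrite Rmin_left, Rmax_right in Hs by exact HL.
    rewrite clamp_id by lra. reflexivity. }
  apply ex_RInt_continuous. intros s _.
  apply continuous_eps_delta. intros eps Heps.
  pose proof (clamp_in L s HL) as Hcs.
  destruct (C0_semigroup_jointly_continuous Sg HS L (L - clamp L s) (w (clamp L s)) eps
              ltac:(lra) Heps) as [d [Hd Hjoint]].
  destruct (proj1 (continuous_eps_delta _ s) (cont_on_0T_clamp L w HL Hw s) d Hd)
    as [d' [Hd' Hw']].
  exists (Rmin d d'). split; [apply Rmin_glb_lt; lra|]. intros u Hu.
  pose proof (Rmin_l d d'). pose proof (Rmin_r d d').
  apply Hjoint.
  - pose proof (clamp_in L u HL). lra.
  - replace (L - clamp L u - (L - clamp L s)) with (- (clamp L u - clamp L s)) by ring.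
    rewrite Rabs_Ropp. pose proof (clamp_lipschitz L u s HL). lra.
  - apply Hw'. lra.
Qed.

End Continuity.


Lemma boundary_identity {K : Ring} {V : ModuleSpace K} (p q x0 y0 f g : V) (a b k : K) :
  plus (plus (plus p (opp (scal k q))) (scal (mult k b) y0)) (minus f (scal k g)) = scal a x0 ->
  minus (plus p f) (scal a x0) = scal k (minus (plus q g) (scal b y0)).
Proof.
  intros H. rewrite <- H, (@minus_plus_shuffle V).
  unfold minus.
  rewrite (@scal_distr_l K V), (@scal_opp_r K V), (@scal_distr_l K V), (@scal_assoc K V).
  reflexivity.
Qed.

Section MildSolution.
Context {X : CompleteNormedModule R_AbsRing}.

Lemma rescaled_mild_formula (Sg : R -> X -> X) (T c : R) (P : X) (w J : R -> X) :
  C0_semigroup Sg -> c <> 0 -> 0 <= T -> J 0 = zero ->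
  (forall t, 0 <= t <= T -> w t = plus (scal (/ c) (Sg t P)) (J t)) ->
  P = scal c (w 0) /\ forall t, 0 <= t <= T -> w t = plus (Sg t (w 0)) (J t).
Proof.
  intros [Hlin [HS0 _]] Hc HT HJ0 Hw.
  assert (HP : P = scal c (w 0)).
  { rewrite (Hw 0 ltac:(lra)), HS0, HJ0, (@plus_zero_r X), (@scal_assoc _ X).
    change (mult c (/ c)) with (c * / c). rewrite Rinv_r by exact Hc.
    symmetry. exact (scal_one P). }
  split; [exact HP|]. intros t Ht.
  rewrite (Hw t Ht), HP.
  replace (Sg t (scal c (w 0))) with (scal c (Sg t (w 0)))
    by (symmetry; exact (linear_scal (Sg t) (Hlin t (proj1 Ht)) c (w 0))).
  rewrite (@scal_assoc _ X). change (mult (/ c) c) with (/ c * c).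
  rewrite Rinv_l by exact Hc. rewrite (@scal_one _ X). reflexivity.
Qed.

Lemma Iterm_minus (Sg : R -> X -> X) (T k : R) (F G : X * X -> X) (x y : R -> X) :
  C0_semigroup Sg -> 0 <= T ->
  ex_RInt (fun s => Sg (T - s) (F (x s, y s))) 0 T ->
  ex_RInt (fun s => Sg (T - s) (G (x s, y s))) 0 T ->
  Iterm Sg T k F G x y =
  minus (RInt (fun s => Sg (T - s) (F (x s, y s))) 0 T)
        (scal k (RInt (fun s => Sg (T - s) (G (x s, y s))) 0 T)).
Proof.
  intros [Hlin _] HT HIF HIG. unfold Iterm.
  transitivity (RInt (fun s => minus (Sg (T - s) (F (x s, y s)))
                                     (scal k (Sg (T - s) (G (x s, y s))))) 0 T).
  - apply RInt_ext. intros s Hs. rewrite Rmin_left, Rmax_right in Hs by exact HT.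
    pose proof (Hlin (T - s) ltac:(lra)) as HL.
    rewrite (linear_minus _ _ _ HL), (linear_scal _ HL). reflexivity.
  - etransitivity; [apply (RInt_minus _ _ _ _ HIF (ex_RInt_scal _ _ _ k HIG))|].
    apply f_equal. apply (RInt_scal _ _ _ k HIG).
Qed.

End MildSolution.

Theorem mainTheorem1 (X : CompleteNormedModule R_AbsRing)
  (S : R -> X -> X) (D : X -> Prop) (A : X -> X) (T a b k : R)
  (F G : X * X -> X) (x y : R -> X) :
  C0_semigroup S -> is_generator S D A ->
  0 < T -> 0 < a -> 0 < b -> 0 < k ->
  (forall p, continuous F p) -> (forall p, continuous G p) ->
  cont_on_0T T x -> cont_on_0T T y ->
  (forall t, 0 <= t <= T -> x t = N1 S T a b k F G x y t) ->
  (forall t, 0 <= t <= T -> y t = N2 S T a b k F G x y t) ->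
  (forall t, 0 <= t <= T ->
     x t = plus (S t (x 0)) (RInt (fun s => S (t - s) (F (x s, y s))) 0 t) /\
     y t = plus (S t (y 0)) (RInt (fun s => S (t - s) (G (x s, y s))) 0 t)) /\
  minus (x T) (scal a (x 0)) = scal k (minus (y T) (scal b (y 0))).
Proof.
  intros HS _ HT Ha Hb Hk HF HG Hx Hy HN1 HN2.
  assert (HT0 : 0 <= T) by lra.
  destruct (rescaled_mild_formula S T a _ x
              (fun t => RInt (fun s => S (t - s) (F (x s, y s))) 0 t)
              HS ltac:(lra) HT0 (RInt_point 0 _) HN1) as [HPx Hmild_x].
  destruct (rescaled_mild_formula S T (k * b) _ y
              (fun t => RInt (fun s => S (t - s) (G (x s, y s))) 0 t)
              HS ltac:(nra) HT0 (RInt_point 0 _) HN2) as [_ Hmild_y].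
  split; [intros t Ht; split; [apply Hmild_x | apply Hmild_y]; exact Ht|].
  rewrite (Iterm_minus S T k F G x y HS HT0) in HPx.
  2, 3: apply ex_RInt_C0_semigroup_convolution, cont_on_0T_comp2; assumption.
  rewrite (Hmild_x T ltac:(lra)), (Hmild_y T ltac:(lra)).
  exact (boundary_identity (V := X) _ _ _ _ _ _ a b k HPx).
Qed.
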